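(* Let $(X,P,o)$ be a generalized parametric metric space such that $P$ satisfies (P5) and $o$ is continuous. Then $(X,\tau_P)$ is a Hausdorff topological space.
   Context: A binary operation $o:[0,\infty)\times[0,\infty)\to[0,\infty)$ (written $\alpha\, o\, \beta$) is assumed to satisfy, for all $\alpha,\beta,\gamma\in[0,\infty)$: (a) $\alpha\, o\, 0=\alpha$; (b) $\alpha\le\beta\implies \alpha\, o\,\gamma\le\beta\, o\,\gamma$; (c) $\alpha\, o\,\gamma=\gamma\, o\,\alpha$; (d) $\alpha\, o\,(\beta\, o\,\gamma)=(\alpha\, o\,\beta)\, o\,\gamma$. It is continuous if whenever $\alpha_n\to\alpha$ and $\beta_n\to\beta$ in $[0,\infty)$ we have $\alpha_n\, o\,\beta_n\to\alpha\, o\,\beta$. A generalized parametric metric on a nonempty set $X$ is a function $P:X\times X\times(0,\infty)\to[0,\infty)$ such that: (P1) $P(a,b,t)=0$ for all $t>0$ if and only if $a=b$; (P2) $P(a,b,t)=P(b,a,t)$ for all $a,b\in X$, $t>0$; (P3) $P(a,b,s+t)\le P(a,x,s)\, o\, P(b,x,t)$ for all $s,t>0$ and $a,b,x\in X$. The triple $(X,P,o)$ is a generalized parametric metric space. Condition (P5): for all $a,b\in X$, the map $t\mapsto P(a,b,t)$ is continuous on $(0,\infty)$. Open ball: $B(a,\alpha,t)=\{b\in X: P(a,b,t)<\alpha\}$. $\tau_P$ is the topology consisting of all $A\subseteq X$ such that for every $a\in A$ there exist $\alpha>0,t>0$ with $B(a,\alpha,t)\subseteq A$. *)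

From Stdlib Require Import Reals.
Open Scope R_scope.

(* A binary operation o on [0,oo), modelled as o : R -> R -> R that maps
   [0,oo) x [0,oo) into [0,oo), with axioms (a)-(d) for nonnegative arguments. *)
Definition is_gen_op (o : R -> R -> R) : Prop :=
  (forall a b, 0 <= a -> 0 <= b -> 0 <= o a b) /\
  (forall a, 0 <= a -> o a 0 = a) /\
  (forall a b c, 0 <= a -> 0 <= b -> 0 <= c -> a <= b -> o a c <= o b c) /\
  (forall a c, 0 <= a -> 0 <= c -> o a c = o c a) /\
  (forall a b c, 0 <= a -> 0 <= b -> 0 <= c -> o a (o b c) = o (o a b) c).

Definition op_continuous (o : R -> R -> R) : Prop :=
  forall (an bn : nat -> R) (a b : R),
    (forall n, 0 <= an n) -> (forall n, 0 <= bn n) -> 0 <= a -> 0 <= b ->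
    Un_cv an a -> Un_cv bn b -> Un_cv (fun n => o (an n) (bn n)) (o a b).

(* Generalized parametric metric: P is only meaningful for t > 0. *)
Definition is_gen_param_metric (X : Type) (o : R -> R -> R)
  (P : X -> X -> R -> R) : Prop :=
  (forall a b t, 0 < t -> 0 <= P a b t) /\
  (forall a b, (forall t, 0 < t -> P a b t = 0) <-> a = b) /\
  (forall a b t, 0 < t -> P a b t = P b a t) /\
  (forall a b x s t, 0 < s -> 0 < t -> P a b (s + t) <= o (P a x s) (P b x t)).

Definition P5 (X : Type) (P : X -> X -> R -> R) : Prop :=
  forall (a b : X) (tn : nat -> R) (t : R),
    0 < t -> (forall n, 0 < tn n) -> Un_cv tn t ->
    Un_cv (fun n => P a b (tn n)) (P a b t).

Definition ball (X : Type) (P : X -> X -> R -> R) (a : X) (al t : R) : X -> Prop :=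
  fun b => P a b t < al.

Definition tauP (X : Type) (P : X -> X -> R -> R) (A : X -> Prop) : Prop :=
  forall a, A a -> exists al t, 0 < al /\ 0 < t /\
    (forall b, ball X P a al t b -> A b).

Definition is_topology (X : Type) (tau : (X -> Prop) -> Prop) : Prop :=
  tau (fun _ => False) /\ tau (fun _ => True) /\
  (forall (I : Type) (F : I -> X -> Prop), (forall i, tau (F i)) ->
      tau (fun x => exists i, F i x)) /\
  (forall A B, tau A -> tau B -> tau (fun x => A x /\ B x)).

Definition hausdorff (X : Type) (tau : (X -> Prop) -> Prop) : Prop :=
  forall a b : X, a <> b -> exists U V, tau U /\ tau V /\ U a /\ V b /\
    (forall x, U x -> V x -> False).

From Stdlib Require Import Reals Lra Lia Classical.
Open Scope R_scope.

(* Two elementary facts drive everything.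
   (1) By (P1) and (a), P a a s = 0 and o x 0 = x, so the triangle inequality
       (P3) with x = a shows that t |-> P a b t is nonincreasing.  Hence
       intersecting two basic balls B(a,al1,t1), B(a,al2,t2) contains the ball
       B(a, min al1 al2, min t1 t2), and tau_P is closed under finite
       intersections; arbitrary unions, the empty and the full set are trivial.
   (2) Continuity of o gives room for perturbation: if o x y < c then
       o (x+e) (y+e) < c for some e > 0.
   For Hausdorffness we do not use the balls themselves (they need not be
   open) but the sets N(a,al,t) = { z | P a z t' < al for some t' < t },
   which are open by (P3) and (2), contain a, and lie inside B(a,al,t) by (1).
   If a <> b then P a b t0 > 0 for some t0; choosing e with o e e < P a b t0,
   the sets N(a,e,t0/2) and N(b,e,t0/2) are disjoint by (P3). *)

Lemma inv_succ_cv_0 : Un_cv (fun n => / INR (S n)) 0.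
Proof.
  apply cv_infty_cv_0. intros M.
  destruct (INR_archimed 1 M) as [N HN]; [lra |].
  exists N. intros n Hn.
  assert (INR N <= INR (S n)) by (apply le_INR; lia).
  lra.
Qed.

Lemma inv_succ_pos (n : nat) : 0 < / INR (S n).
Proof. apply Rinv_0_lt_compat, lt_0_INR; lia. Qed.

Section Operation.
Variable o : R -> R -> R.
Hypothesis o_op : is_gen_op o.

Lemma op_mono (x x' y y' : R) :
  0 <= x -> x <= x' -> 0 <= y -> y <= y' -> o x y <= o x' y'.
Proof.
  intros Hx Hxx' Hy Hyy'. destruct o_op as (_ & _ & Hmono & Hcomm & _).
  apply Rle_trans with (o x' y); [apply Hmono; lra |].
  rewrite (Hcomm x' y), (Hcomm x' y') by lra. apply Hmono; lra.
Qed.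

Hypothesis o_cont : op_continuous o.

Lemma op_perturbation (x y c : R) :
  0 <= x -> 0 <= y -> o x y < c ->
  exists e, 0 < e /\ o (x + e) (y + e) < c.
Proof.
  intros Hx Hy Hc.
  assert (Hshift : forall z, Un_cv (fun n => z + / INR (S n)) z).
  { intros z.
    assert (Hconst : Un_cv (fun _ => z) z).
    { intros eps Heps. exists 0%nat. intros n _. unfold R_dist.
      rewrite Rminus_diag, Rabs_R0. exact Heps. }
    pose proof (CV_plus _ _ z 0 Hconst inv_succ_cv_0) as Hsum.
    rewrite Rplus_0_r in Hsum. exact Hsum. }
  assert (Hlim : Un_cv (fun n => o (x + / INR (S n)) (y + / INR (S n))) (o x y)).
  { apply o_cont; auto; intros n; pose proof (inv_succ_pos n); lra. }
  destruct (Hlim (c - o x y)) as [N HN]; [lra |].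
  specialize (HN N (le_n N)). unfold R_dist in HN. apply Rabs_def2 in HN.
  exists (/ INR (S N)). split; [apply inv_succ_pos | lra].
Qed.

End Operation.

Section Metric.
Variables (X : Type) (o : R -> R -> R) (P : X -> X -> R -> R).
Hypothesis o_op : is_gen_op o.
Hypothesis P_metric : is_gen_param_metric X o P.

Lemma P_nonneg (a b : X) (t : R) : 0 < t -> 0 <= P a b t.
Proof. destruct P_metric as (H & _). auto. Qed.

Lemma P_antitone (a b : X) (s t : R) : 0 < s -> s <= t -> P a b t <= P a b s.
Proof.
  intros Hs Hst. destruct (Req_dec s t) as [<- | Hne]; [lra |].
  destruct P_metric as (_ & Hsep & Hsym & Htri).
  destruct o_op as (_ & Hzero & _ & Hcomm & _).
  assert (Haa : P a a (t - s) = 0) by (apply (proj2 (Hsep a a)); auto; lra).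
  replace t with ((t - s) + s) by ring.
  eapply Rle_trans; [apply (Htri a b a (t - s) s); lra |].
  rewrite Haa, Hcomm, Hzero, (Hsym b a) by (try apply P_nonneg; lra). lra.
Qed.

Lemma P_separates (a b : X) : a <> b -> exists t, 0 < t /\ 0 < P a b t.
Proof.
  intros Hab. destruct (classic (exists t, 0 < t /\ 0 < P a b t)) as [H | H];
    [exact H | exfalso].
  apply Hab, (proj2 P_metric). intros t Ht.
  pose proof (P_nonneg a b t Ht) as Hnn.
  destruct (Req_dec (P a b t) 0) as [Hz | Hnz]; [exact Hz |].
  exfalso. apply H. exists t. split; lra.
Qed.

(* tau_P is a topology; only the intersection axiom needs Fact (1). *)
Lemma tauP_topology : is_topology X (tauP X P).
Proof.
  split; [| split; [| split]].
  - intros a [].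
  - intros a _. exists 1, 1. repeat split; lra.
  - intros I F HF x [i Hi].
    destruct (HF i x Hi) as (al & t & Hal & Ht & Hball).
    exists al, t. repeat split; auto. intros b Hb. exists i. auto.
  - intros A B HA HB x [HAx HBx].
    destruct (HA x HAx) as (al1 & t1 & Hal1 & Ht1 & HballA).
    destruct (HB x HBx) as (al2 & t2 & Hal2 & Ht2 & HballB).
    exists (Rmin al1 al2), (Rmin t1 t2).
    split; [apply Rmin_pos; auto |]. split; [apply Rmin_pos; auto |].
    intros b Hb. unfold ball in Hb.
    pose proof (Rmin_l al1 al2). pose proof (Rmin_r al1 al2).
    pose proof (P_antitone x b (Rmin t1 t2) t1 (Rmin_pos _ _ Ht1 Ht2) (Rmin_l _ _)).
    pose proof (P_antitone x b (Rmin t1 t2) t2 (Rmin_pos _ _ Ht1 Ht2) (Rmin_r _ _)).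
    split; [apply HballA | apply HballB]; unfold ball; lra.
Qed.

Definition nbhd (a : X) (al t : R) : X -> Prop :=
  fun z => exists t', 0 < t' < t /\ P a z t' < al.

Lemma nbhd_center (a : X) (al t : R) : 0 < al -> 0 < t -> nbhd a al t a.
Proof.
  intros Hal Ht. exists (t / 2). split; [lra |].
  rewrite (proj2 (proj1 (proj2 P_metric) a a) eq_refl); lra.
Qed.

Lemma nbhd_in_ball (a z : X) (al t : R) : nbhd a al t z -> P a z t < al.
Proof.
  intros (t' & Ht' & Hz). pose proof (P_antitone a z t' t). lra.
Qed.

Hypothesis o_cont : op_continuous o.

(* N(a,al,t) is open: around z with P a z t' < al, a small ball with parameter
   (t - t')/2 stays inside, by the triangle inequality and Fact (2). *)
Lemma nbhd_open (a : X) (al t : R) : tauP X P (nbhd a al t).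
Proof.
  intros z (t' & Ht' & Hz).
  assert (Hd : 0 <= P a z t') by (apply P_nonneg; lra).
  destruct (op_perturbation o o_cont (P a z t') 0 al Hd (Rle_refl 0))
    as (e & He & Hsmall).
  { rewrite (proj1 (proj2 o_op)); lra. }
  exists e, ((t - t') / 2). split; [exact He |]. split; [lra |].
  intros w Hw. unfold ball in Hw.
  exists (t' + (t - t') / 2). split; [lra |].
  destruct P_metric as (_ & _ & Hsym & Htri).
  eapply Rle_lt_trans; [apply (Htri a w z t' ((t - t') / 2)); lra |].
  eapply Rle_lt_trans; [| exact Hsmall].
  apply (op_mono o o_op); try apply P_nonneg; try lra.
  rewrite Hsym by lra. lra.
Qed.

Lemma tauP_hausdorff : hausdorff X (tauP X P).
Proof.
  intros a b Hab.
  destruct (P_separates a b Hab) as (t0 & Ht0 & Hpos).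
  destruct (op_perturbation o o_cont 0 0 (P a b t0) (Rle_refl 0) (Rle_refl 0))
    as (e & He & Hsmall).
  { rewrite (proj1 (proj2 o_op)); lra. }
  rewrite !Rplus_0_l in Hsmall.
  exists (nbhd a e (t0 / 2)), (nbhd b e (t0 / 2)).
  split; [apply nbhd_open |]. split; [apply nbhd_open |].
  split; [apply nbhd_center; lra |]. split; [apply nbhd_center; lra |].
  intros z Hza Hzb.
  apply nbhd_in_ball in Hza. apply nbhd_in_ball in Hzb.
  assert (Htri : P a b t0 <= o (P a z (t0 / 2)) (P b z (t0 / 2))).
  { replace t0 with (t0 / 2 + t0 / 2) at 1 by field.
    apply (proj2 (proj2 (proj2 P_metric))); lra. }
  assert (o (P a z (t0 / 2)) (P b z (t0 / 2)) <= o e e).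
  { apply (op_mono o o_op); try apply P_nonneg; lra. }
  lra.
Qed.

End Metric.

Theorem mainTheorem7 (X : Type) (o : R -> R -> R) (P : X -> X -> R -> R) :
  inhabited X ->
  is_gen_op o -> op_continuous o -> is_gen_param_metric X o P -> P5 X P ->
  is_topology X (tauP X P) /\ hausdorff X (tauP X P).
Proof.
  intros _ o_op o_cont P_metric _. split.
  - exact (tauP_topology X o P o_op P_metric).
  - exact (tauP_hausdorff X o P o_op P_metric o_cont).
Qed.
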